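(* Let $s=(s_{i,m})_{1\le i\le b,1\le m\le M}$ be a matrix with $1\ge s_{1,m}\ge s_{2,m}\ge\cdots\ge s_{b,m}\ge0$ for each $m$ and $\sum_m s_{1,m}\le1$, and put $s_i=\sum_m s_{i,m}$. Suppose $$s_1\ge\lambda+(k-\zeta-6)\Delta\quad\text{and}\quad s_{1,m}\ge\lambda v_m-\theta_m\Delta\ \ \text{for all }1\le m\le M.$$ Then $$\left(\lambda+\Delta-\sum_{m=1}^M w_m s_{1,m}\right)\mathbb I\Bigl\{\sum_{i=1}^b s_i>\lambda+k\Delta+\tfrac1N\Bigr\}\le0.$$
   Context: Parameters: integers $N\ge2$, $b\ge1$, $M\ge2$; $\lambda=1-N^{-\alpha}$ with $0<\alpha<1/2$; $\Delta=\frac{\log N}{\sqrt N}$. Coxian parameters $\mu_1,\dots,\mu_M>0$, $p_1,\dots,p_{M-1}\in[0,1)$; $v_m=\prod_{i=1}^{m-1}p_i/\mu_m$ with $\sum_mv_m=1$; $\bar v=\min_mv_m$. $w_m=(1-p_m)\mu_m$ for $m<M$ and $w_M=\mu_M$; $w_u=\max_mw_m$, $w_l=\min_mw_m$. For $2\le m\le M$: $a_m=\frac{\mu_m}{p_1\mu_1+\mu_m}$, $b_m=(1-a_m)(1+\sum_{r=m+1}^M\frac{v_r}{v_1})-\frac{a_mv_m}{v_1}$; $\xi=\sum_{m=2}^Mb_m\prod_{j=m+1}^Ma_j$ (asserted $0<\xi<1$); $C=\sqrt{\frac{2\bar v^2\log(1/\xi)}{3M+(3M+4)\log(1/\xi)}}$;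 $\theta_m=\frac{6\mu_1v_m+5(m-1)v_m}{C}$; $\zeta=\frac{4w_ub}{w_l}\bigl[(\frac1{w_l}-\frac1{w_u})\sum_m\theta_mw_m+\frac1{w_l}+6\bigr]$; $k=\frac{\sum_m\theta_mw_m}{w_u}+(1+\frac{w_l}{4w_ub})\zeta-\sum_m\theta_m$. *)

From HB Require Import structures.
From mathcomp Require Import all_boot all_order all_algebra.
From mathcomp Require Import reals exp.
Set Implicit Arguments. Unset Strict Implicit. Unset Printing Implicit Defensive.
Import Order.TTheory GRing.Theory Num.Theory.
Local Open Scope ring_scope.

Section CoxianDefs.
Variable R : realType.

Definition lam (N : nat) (alpha : R) : R := 1 - powR (N%:R) (- alpha).
Definition Dlt (N : nat) : R := ln (N%:R) / Num.sqrt (N%:R).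

Variables (M : nat) (mu p : nat -> R).

Definition v (m : nat) : R := (\prod_(1 <= i < m) p i) / mu m.
Definition vbar : R := \big[Num.min/v 1]_(1 <= m < M.+1) v m.
Definition w (m : nat) : R := if (m < M)%N then (1 - p m) * mu m else mu m.
Definition wu : R := \big[Num.max/w 1]_(1 <= m < M.+1) w m.
Definition wl : R := \big[Num.min/w 1]_(1 <= m < M.+1) w m.
Definition a (m : nat) : R := mu m / (p 1 * mu 1 + mu m).
Definition bb (m : nat) : R :=
  (1 - a m) * (1 + \sum_(m.+1 <= r < M.+1) v r / v 1) - a m * v m / v 1.
Definition xi : R :=
  \sum_(2 <= m < M.+1) bb m * \prod_(m.+1 <= j < M.+1) a j.
Definition Cc : R :=
  Num.sqrt (2 * vbar ^+ 2 * ln (1 / xi) /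
            (3 * M%:R + (3 * M%:R + 4) * ln (1 / xi))).
Definition theta (m : nat) : R := (6 * mu 1 * v m + 5 * (m.-1)%:R * v m) / Cc.
Definition zeta (b : nat) : R :=
  4 * wu * b%:R / wl *
  ((1 / wl - 1 / wu) * (\sum_(1 <= m < M.+1) theta m * w m) + 1 / wl + 6).
Definition kk (b : nat) : R :=
  (\sum_(1 <= m < M.+1) theta m * w m) / wu + (1 + wl / (4 * wu * b%:R)) * zeta b
  - \sum_(1 <= m < M.+1) theta m.
End CoxianDefs.

From HB Require Import structures.
From mathcomp Require Import all_boot all_order all_algebra.
From mathcomp Require Import reals exp.
From mathcomp Require Import ring lra.
Set Implicit Arguments. Unset Strict Implicit. Unset Printing Implicit Defensive.
Import Order.TTheory GRing.Theory Num.Theory.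
Local Open Scope ring_scope.

(* Since the Coxian weights satisfy sum_m w_m v_m = 1, the quantity
   sum_m w_m s_{1,m} - lambda equals sum_m w_m (s_{1,m} - lambda v_m).  Adding
   Delta sum_m theta_m w_m makes every summand a nonnegative multiple of w_m,
   so replacing w_m by w_l bounds it below by w_l (s_1 - lambda + Delta sum_m theta_m),
   hence by w_l Delta (k - zeta - 6 + sum_m theta_m).  The constants k and zeta
   are chosen so that this equals Delta (sum_m theta_m w_m + 1); thus
   sum_m w_m s_{1,m} >= lambda + Delta and the first factor is nonpositive,
   whatever the value of the indicator. *)

Lemma telescope_prod_sub (R : comPzRingType) (p : nat -> R) n : (1 <= n)%N ->
  \sum_(1 <= m < n) (1 - p m) * \prod_(1 <= i < m) p i
  = 1 - \prod_(1 <= i < n) p i.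
Proof.
move=> n_gt0; rewrite (eq_big_nat _ _
  (F2 := fun m => - \prod_(1 <= i < m.+1) p i - - \prod_(1 <= i < m) p i)).
  by rewrite telescope_sumr // (big_geq (leqnn 1)) opprK addrC.
by move=> m /andP[m_gt0 _]; rewrite big_nat_recr //=; ring.
Qed.

Lemma ler_wsum_nat_min (R : numDomainType) (l : R) (w c : nat -> R) m n :
  (forall i, (m <= i < n)%N -> 0 <= c i) ->
  (forall i, (m <= i < n)%N -> l <= w i) ->
  l * \sum_(m <= i < n) c i <= \sum_(m <= i < n) w i * c i.
Proof.
move=> c_ge0 l_le_w; rewrite mulr_sumr; apply: ler_sum_nat => i i_mn.
by rewrite ler_wpM2r ?c_ge0 ?l_le_w.
Qed.

Section Coxian.
Variables (R : realType) (M : nat) (mu p : nat -> R).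
Hypothesis M_gt0 : (0 < M)%N.
Hypothesis mu_gt0 : forall m, (1 <= m <= M)%N -> 0 < mu m.
Hypothesis p_lt1 : forall m, (1 <= m < M)%N -> p m < 1.

Lemma w_gt0 m : (1 <= m <= M)%N -> 0 < w M mu p m.
Proof.
move=> /[dup] m_range /andP[m_gt0 _]; rewrite /w; case: ifP => [m_ltM|_].
  by rewrite mulr_gt0 ?mu_gt0 // subr_gt0 p_lt1 // m_gt0.
exact: mu_gt0.
Qed.

Lemma wl_gt0 : 0 < wl M mu p.
Proof.
rewrite /wl big_seq; apply: lt_bigmin => [|i]; first by rewrite w_gt0 ?M_gt0.
by rewrite mem_index_iota ltnS => /w_gt0.
Qed.

Lemma wu_gt0 : 0 < wu M mu p.
Proof. by apply: lt_le_trans (bigmax_ge_id _ _ _ _); rewrite w_gt0 ?M_gt0. Qed.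

Lemma wl_le_w m : (1 <= m < M.+1)%N -> wl M mu p <= w M mu p m.
Proof. by move=> m_range; rewrite /wl ge_bigmin_seq // mem_index_iota. Qed.

(* w_m v_m = (1 - p_m) p_1 ... p_{m-1} for m < M, so the sum telescopes. *)
Lemma sum_w_v : \sum_(1 <= m < M.+1) w M mu p m * v mu p m = 1.
Proof.
have mu_neq0 m : (1 <= m <= M)%N -> mu m != 0 by move/mu_gt0/lt0r_neq0.
rewrite big_nat_recr //= (eq_big_nat _ _
  (F2 := fun m => (1 - p m) * \prod_(1 <= i < m) p i)); last first.
  move=> m /andP[m_gt0 m_ltM]; rewrite /w /v m_ltM.
  by field; rewrite mu_neq0 // m_gt0 ltnW.
rewrite telescope_prod_sub // /w /v ltnn.
by field; rewrite mu_neq0 // M_gt0 /=.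
Qed.

Lemma kk_zeta_identity b : (0 < b)%N ->
  wl M mu p * (kk M mu p b - zeta M mu p b - 6 + \sum_(1 <= m < M.+1) theta M mu p m)
  = \sum_(1 <= m < M.+1) theta M mu p m * w M mu p m + 1.
Proof.
move=> b_gt0; rewrite /kk /zeta.
by field; rewrite pnatr_eq0 -lt0n b_gt0 !gt_eqF ?wl_gt0 ?wu_gt0.
Qed.

Lemma sum_w_ge_lam_add (b : nat) (lm D : R) (x : nat -> R) : (0 < b)%N ->
  \sum_(1 <= m < M.+1) v mu p m = 1 ->
  lm + (kk M mu p b - zeta M mu p b - 6) * D <= \sum_(1 <= m < M.+1) x m ->
  (forall m, (1 <= m <= M)%N -> lm * v mu p m - theta M mu p m * D <= x m) ->
  lm + D <= \sum_(1 <= m < M.+1) w M mu p m * x m.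
Proof.
move=> b_gt0 sum_v x_sum_ge x_ge.
pose slack m := x m - lm * v mu p m + theta M mu p m * D.
have slack_ge0 m : (1 <= m < M.+1)%N -> 0 <= slack m.
  by rewrite ltnS => /x_ge; rewrite /slack; lra.
have sum_slack : \sum_(1 <= m < M.+1) slack m
    = \sum_(1 <= m < M.+1) x m - lm + D * \sum_(1 <= m < M.+1) theta M mu p m.
  rewrite -[lm]mulr1 -sum_v !mulr_sumr -sumrB -big_split /=.
  by apply: eq_bigr => m _; rewrite /slack; ring.
have sum_w_slack : \sum_(1 <= m < M.+1) w M mu p m * slack m
    = \sum_(1 <= m < M.+1) w M mu p m * x m - lm
      + D * \sum_(1 <= m < M.+1) theta M mu p m * w M mu p m.
  rewrite -[lm]mulr1 -sum_w_v !mulr_sumr -sumrB -big_split /=.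
  by apply: eq_bigr => m _; rewrite /slack; ring.
have slack_lower : D * (\sum_(1 <= m < M.+1) theta M mu p m * w M mu p m + 1)
    <= wl M mu p * \sum_(1 <= m < M.+1) slack m.
  rewrite -(kk_zeta_identity b_gt0) mulrCA ler_wpM2l ?(ltW wl_gt0) // sum_slack.
  by move: x_sum_ge; lra.
have := ler_wsum_nat_min slack_ge0 wl_le_w.
by rewrite sum_w_slack; move: slack_lower; rewrite mulrDr mulr1; lra.
Qed.

End Coxian.

Theorem lemma13 (R : realType) (N b M : nat) (alpha : R) (mu p : nat -> R)
  (s : nat -> nat -> R)
  (hN : (2 <= N)%N) (hb : (1 <= b)%N) (hM : (2 <= M)%N)
  (ha0 : 0 < alpha) (ha1 : alpha < 1 / 2)
  (hmu : forall m, (1 <= m <= M)%N -> 0 < mu m)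
  (hp : forall m, (1 <= m < M)%N -> 0 <= p m /\ p m < 1)
  (hv : \sum_(1 <= m < M.+1) v mu p m = 1)
  (hxi : 0 < xi M mu p /\ xi M mu p < 1)
  (hs1 : forall m, (1 <= m <= M)%N -> s 1%N m <= 1)
  (hsmon : forall i m, (1 <= i < b)%N -> (1 <= m <= M)%N -> s i.+1 m <= s i m)
  (hsb : forall m, (1 <= m <= M)%N -> 0 <= s b m)
  (hsum1 : \sum_(1 <= m < M.+1) s 1%N m <= 1)
  (hS1 : \sum_(1 <= m < M.+1) s 1%N m
         >= lam N alpha + (kk M mu p b - zeta M mu p b - 6) * Dlt R N)
  (hS1m : forall m, (1 <= m <= M)%N ->
          s 1%N m >= lam N alpha * v mu p m - theta M mu p m * Dlt R N) :
  (lam N alpha + Dlt R N - \sum_(1 <= m < M.+1) w M mu p m * s 1%N m) *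
  (if \sum_(1 <= i < b.+1) \sum_(1 <= m < M.+1) s i m
        > lam N alpha + kk M mu p b * Dlt R N + 1 / N%:R
   then 1 else 0) <= 0.
Proof.
have p_lt1 m (m_range : (1 <= m < M)%N) : p m < 1 := (hp m m_range).2.
have := sum_w_ge_lam_add (ltnW hM) hmu p_lt1 hb hv hS1 hS1m.
by rewrite -subr_le0; case: ifP; rewrite ?mulr1 ?mulr0.
Qed.
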